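(* Let $\theta>0$ be a real number and, for integers $N\ge 1$ and $r\ge 0$, let \[ W_N(r)=\sum_{\pi \in \mathfrak{S}_N \text{ $r$-winnable}} \theta^{\pi^{-1}(N)-1}. \] Then $W_N(0)=(N-1)!$, and for $1\le r\le N-1$, \[ W_N(r) = (N-1)!\; r \sum_{i=r}^{N-1} \frac{\theta^i}{i}. \]
   Context: $\mathfrak{S}_N$ is the set of permutations $\pi=[\pi_1\pi_2\cdots\pi_N]$ of $\{1,\dots,N\}$ in one-line notation; $\pi^{-1}(N)$ is the position of the entry $N$. A left-to-right maximum of $\pi$ is an entry $\pi_j$ larger than every $\pi_i$ with $i<j$. For $r\ge 0$, the $r$-positional strategy rejects $\pi_1,\dots,\pi_r$ and then accepts the first subsequent left-to-right maximum (so for $r=0$ it accepts $\pi_1$). The permutation $\pi$ is called $r$-winnable if this strategy accepts the entry $N$. *)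

(* Permutations of {1..N} are modelled as 'S_N = {perm 'I_N},
   i.e. permutations of {0,..,N-1}; the one-line entry pi_{j+1} of the paper is
   (pi j).+1, so the entry N is the value N.-1 and positions are 0-indexed. *)
From HB Require Import structures.
From mathcomp Require Import all_boot all_order all_algebra all_fingroup.
Set Implicit Arguments. Unset Strict Implicit. Unset Printing Implicit Defensive.
Import Order.TTheory GRing.Theory Num.Theory.

Definition ltr_max (N : nat) (pi : 'S_N) (j : 'I_N) : bool :=
  [forall i : 'I_N, (i < j) ==> (pi i < pi j)].

(* The r-positional strategy rejects the first r entries (0-indexed positions
   0..r-1) and accepts the first later left-to-right maximum.  pi is r-winnable
   iff the accepted entry exists and is the entry N (value N.-1 here). *)
Definition winnable (N r : nat) (pi : 'S_N) : bool :=
  [exists j : 'I_N,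
     [&& r <= j, ltr_max pi j,
         [forall k : 'I_N, ((r <= k) && (k < j)) ==> ~~ ltr_max pi k]
       & (pi j : nat) == N.-1]].

(* theta^(pi^{-1}(N) - 1): the unique 0-indexed position j with pi j = N.-1. *)
Definition weight (R : nzRingType) (theta : R) (N : nat) (pi : 'S_N) : R :=
  (\sum_(j : 'I_N | (pi j : nat) == N.-1) theta ^+ j)%R.

Definition W (R : nzRingType) (theta : R) (N r : nat) : R :=
  (\sum_(pi : 'S_N | winnable r pi) weight theta pi)%R.

From HB Require Import structures.
From mathcomp Require Import all_boot all_order all_algebra all_fingroup.
From mathcomp Require Import ring.
Import Order.TTheory GRing.Theory Num.Theory.
Set Implicit Arguments. Unset Strict Implicit. Unset Printing Implicit Defensive.

(* Let j be the (0-indexed) position of the entry N.  For r >= 1 the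
   r-positional strategy accepts N exactly when r <= j and the largest entry
   before position j sits among the first r positions: that entry is a
   left-to-right maximum, and none can occur between it and position j.
   Swapping two positions before j shows that, among the (N-1)! permutations
   with N at position j, the position of this prefix maximum is uniformly
   distributed over the j earlier positions; hence r (N-1)!/j of them are
   r-winnable, each of weight theta^j.  For r = 0 only j = 0 wins. *)

Section WinnableCount.

Variable n : nat.
Implicit Types (pi : 'S_n.+1) (i j m : 'I_n.+1).

Definition prefix_argmax pi j : 'I_n.+1 := [arg max_(i > ord0 | i < j) pi i].

Lemma prefix_argmaxP pi j : 0 < j ->
  extremum_spec geq (fun i : 'I_n.+1 => i < j) (fun i => pi i : nat) (prefix_argmax pi j).
Proof. exact: (@arg_maxnP _ ord0). Qed.

Lemma prefix_argmax_lt pi j : 0 < j -> prefix_argmax pi j < j.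
Proof. by case/(prefix_argmaxP pi). Qed.

Lemma prefix_argmax_max pi j i :
  i < j -> i != prefix_argmax pi j -> pi i < pi (prefix_argmax pi j).
Proof.
move=> ij; have j_gt0 : 0 < j by apply: leq_ltn_trans ij.
case: (prefix_argmaxP pi j_gt0) => m _ m_max im.
have le_im : pi i <= pi m := m_max i ij.
rewrite ltn_neqAle le_im andbT.
by apply: contra im => /eqP/val_inj/perm_inj ->.
Qed.

Lemma prefix_argmax_eq pi j m :
  m < j -> (forall i, i < j -> i != m -> pi i < pi m) -> prefix_argmax pi j = m.
Proof.
move=> mj m_max; apply/eqP; apply: contraT => a_neq_m.
have j_gt0 : 0 < j by apply: leq_ltn_trans mj.
have := m_max _ (prefix_argmax_lt pi j_gt0) a_neq_m.
by rewrite ltnNge ltnW // prefix_argmax_max // eq_sym.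
Qed.

Lemma ltr_max_prefix_argmax pi j : 0 < j -> ltr_max pi (prefix_argmax pi j).
Proof.
move=> j_gt0; apply/forallP => i; apply/implyP => i_lt.
apply: prefix_argmax_max; first exact: ltn_trans i_lt (prefix_argmax_lt pi j_gt0).
by rewrite neq_ltn i_lt.
Qed.

Lemma prefix_argmax_tperm pi j m m' : m < j -> m' < j ->
  prefix_argmax (tperm m m' * pi) j = tperm m m' (prefix_argmax pi j).
Proof.
move=> mj m'j; have j_gt0 : 0 < j by apply: leq_ltn_trans mj.
have tperm_lt i : i < j -> tperm m m' i < j by case: tpermP.
apply: prefix_argmax_eq => [|i ij ine]; first exact/tperm_lt/prefix_argmax_lt.
rewrite !permM tpermK; apply: prefix_argmax_max; first exact: tperm_lt.
by apply: contraNneq ine => <-; rewrite tpermK.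
Qed.

Lemma ltr_max_top pi j : pi j = ord_max -> ltr_max pi j.
Proof.
move=> top; apply/forallP => i; apply/implyP => ij.
rewrite top ltn_neqAle -ltnS ltn_ord andbT.
by apply: contraTneq ij => /val_inj; rewrite -top => /perm_inj ->; rewrite ltnn.
Qed.

Lemma winnable_top r pi j : 0 < r -> pi j = ord_max ->
  winnable r pi = (r <= j) && (prefix_argmax pi j < r).
Proof.
move=> r_gt0 top; apply/existsP/andP => [[j'] | [rj ar]].
  case/and4P=> rj' _ /forallP not_ltr /eqP top'.
  have ej : j' = j by apply: (@perm_inj _ pi); rewrite top; apply: val_inj.
  subst j'; have j_gt0 := leq_trans r_gt0 rj'.
  split=> //; rewrite ltnNge; apply/negP => ra.
  have := implyP (not_ltr (prefix_argmax pi j)).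
  by rewrite ra prefix_argmax_lt // ltr_max_prefix_argmax // => /(_ isT).
have j_gt0 := leq_trans r_gt0 rj.
exists j; rewrite rj ltr_max_top //= top eqxx andbT.
apply/forallP => k; apply/implyP => /andP [rk kj]; apply/negP => /forallP ltr_k.
have ak : prefix_argmax pi j < k := leq_trans ar rk.
have := prefix_argmax_max kj (negbT (gtn_eqF ak)); rewrite ltnNge ltnW //.
exact: implyP (ltr_k _) ak.
Qed.

Lemma winnable0_top pi j : pi j = ord_max -> winnable 0 pi = (j == ord0).
Proof.
move=> top; apply/existsP/eqP => [[j'] | j0].
  case/and4P=> _ _ /forallP not_ltr /eqP top'.
  have <- : j' = j by apply: (@perm_inj _ pi); rewrite top; apply: val_inj.
  apply/val_inj/eqP; rewrite /= -leqn0 leqNgt; apply/negP => j'_gt0.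
  by have := implyP (not_ltr ord0) j'_gt0; rewrite /ltr_max; case: forallP.
exists j; rewrite ltr_max_top //= top eqxx andbT.
by apply/forallP => k; rewrite j0.
Qed.

Lemma card_top_at j : #|[pred pi : 'S_n.+1 | pi j == ord_max]| = n`!.
Proof.
have fix_on pi : (pi ord_max == ord_max) = (pi \in perm_on [set~ ord_max]).
  apply/idP/idP => [/eqP fix_max | /out_perm -> //]; last by rewrite !inE eqxx.
  by apply/subsetP => i; rewrite !inE; apply: contraNneq => ->; rewrite fix_max.
rewrite -sum1_card (reindex_inj (mulgI (tperm j ord_max))) /=.
rewrite (eq_bigl [in perm_on [set~ ord_max]]) => [|pi]; last first.
  by rewrite inE /= permM tpermL -fix_on.
by rewrite sum1_card card_perm cardsC1 card_ord.
Qed.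

Lemma card_top_prefix_argmax_eq j m m' : m < j -> m' < j ->
  #|[pred pi : 'S_n.+1 | (pi j == ord_max) && (prefix_argmax pi j == m)]| =
  #|[pred pi : 'S_n.+1 | (pi j == ord_max) && (prefix_argmax pi j == m')]|.
Proof.
move=> mj m'j; rewrite -!sum1_card (reindex_inj (mulgI (tperm m m'))) /=.
apply: eq_bigl => pi; rewrite !inE /= permM tpermD ?(negbT (ltn_eqF _)) //.
by rewrite prefix_argmax_tperm // (can2_eq (tpermK m m') (tpermK m m')) tpermL.
Qed.

Lemma card_top_prefix_argmax_lt j k : 0 < k -> k <= j ->
  #|[pred pi : 'S_n.+1 | (pi j == ord_max) && (prefix_argmax pi j < k)]| =
  k * #|[pred pi : 'S_n.+1 | (pi j == ord_max) && (prefix_argmax pi j == ord0)]|.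
Proof.
move=> k_gt0 kj; set c := (X in _ = _ * X).
have -> : k * c = \sum_(m < n.+1 | m < k) c.
  rewrite -(big_ord_widen _ (fun=> c)) ?sum_nat_const ?card_ord //.
  exact: leq_trans kj (ltnW (ltn_ord j)).
rewrite -sum1_card (partition_big (prefix_argmax^~ j) (fun m : 'I_n.+1 => m < k)) /=.
  apply: eq_bigr => m mk; rewrite /c -(@card_top_prefix_argmax_eq j m).
  - rewrite -sum1_card; apply: eq_bigl => pi; rewrite !inE -andbA.
    by case: (prefix_argmax pi j =P m) => [->|]; rewrite ?mk ?andbF.
  - exact: leq_trans mk kj.
  - exact: leq_trans k_gt0 kj.
by move=> pi /andP [].
Qed.

Definition card_win_at r j :=
  #|[pred pi : 'S_n.+1 | winnable r pi && (pi j == ord_max)]|.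

Lemma card_win_at0 j : card_win_at 0 j = if j == ord0 then n`! else 0.
Proof.
have win_top pi : (winnable 0 pi && (pi j == ord_max)) = (j == ord0) && (pi j == ord_max).
  by case: (pi j =P ord_max) => [/winnable0_top ->|]; rewrite ?andbF.
rewrite /card_win_at (eq_card win_top); case: (j =P ord0) => _; first exact: card_top_at.
exact: eq_card0.
Qed.

Lemma card_win_at_lt r j : 0 < r -> j < r -> card_win_at r j = 0.
Proof.
move=> r_gt0 jr; apply: eq_card0 => pi; rewrite !inE.
by case: (pi j =P ord_max) => [/(winnable_top r_gt0) ->|]; rewrite ?andbF // leqNgt jr.
Qed.

Lemma card_win_at_ge r j : 0 < r -> r <= j -> j * card_win_at r j = r * n`!.
Proof.
move=> r_gt0 rj; have j_gt0 := leq_trans r_gt0 rj.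
have win_top pi : (winnable r pi && (pi j == ord_max)) =
    (pi j == ord_max) && (prefix_argmax pi j < r).
  by case: (pi j =P ord_max) => [/(winnable_top r_gt0) ->|]; rewrite ?andbF // rj andbC.
have top_lt : #|[pred pi : 'S_n.+1 | pi j == ord_max]| =
    #|[pred pi : 'S_n.+1 | (pi j == ord_max) && (prefix_argmax pi j < j)]|.
  by apply: eq_card => pi; rewrite !inE prefix_argmax_lt ?andbT.
rewrite /card_win_at (eq_card win_top) -(card_top_at j) top_lt.
by rewrite !card_top_prefix_argmax_lt ?leqnn // mulnCA.
Qed.

End WinnableCount.

Local Open Scope ring_scope.

Lemma W_card_win_at (R : nzRingType) (theta : R) n r :
  W theta n.+1 r = \sum_(j < n.+1) (card_win_at r j)%:R * theta ^+ j.
Proof.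
rewrite /W /weight (exchange_big_dep xpredT) //=; apply: eq_bigr => j _.
rewrite /card_win_at -sum1_card natr_sum mulr_suml.
by apply: eq_big => pi; rewrite ?inE ?mul1r.
Qed.

Theorem corollary2p2 (R : realFieldType) (theta : R) (N : nat) :
  0 < theta -> (1 <= N)%N ->
  W theta N 0 = (N.-1)`!%:R /\
  (forall r : nat, (1 <= r <= N.-1)%N ->
     W theta N r =
       (N.-1)`!%:R * r%:R * \sum_(r <= i < N) theta ^+ i / i%:R).
Proof.
move=> _; case: N => [//|n] _ /=; split.
  rewrite W_card_win_at (bigD1 ord0) //= big1 => [|j j_neq0].
    by rewrite card_win_at0 eqxx expr0 mulr1 addr0.
  by rewrite card_win_at0 (negbTE j_neq0) mul0r.
move=> r /andP [r_gt0 _].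
rewrite W_card_win_at big_geq_mkord big_distrr [RHS]big_mkcond /=.
apply: eq_bigr => j _; case: leqP => [rj | jr]; last by rewrite card_win_at_lt ?mul0r.
have j_neq0 : j%:R != 0 :> R by rewrite pnatr_eq0 -lt0n (leq_trans r_gt0 rj).
have /(congr1 (fun k => k%:R : R)) := card_win_at_ge r_gt0 rj.
rewrite !natrM => card_eq.
by rewrite -[(card_win_at r j)%:R](mulKf j_neq0) card_eq; field.
Qed.
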